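(* Let $B=F(b_1,\ldots,b_n)$ be a Ferrers board with $0\le b_1\le\cdots\le b_n$ and $b_n>0$, and let $B^-=F(b_1,\ldots,b_{n-1})$. Then for all $1\le k\le n$, $$\mathbf{rT}_k(B,p,q)=\mathbf{rT}_k(B^-,p,q)+F_{b_{n-(k-1)}}(p,q)\,\mathbf{rT}_{k-1}(B^-,p,q).$$
   Context: For $m\ge 1$, a Fibonacci tiling of height $m$ is a tiling of a column of height $m$ by tiles of height 1 and height 2 whose bottom-most tile has height 1. For such a tiling $T$, $\mathrm{one}(T)$ and $\mathrm{two}(T)$ denote the numbers of tiles of height 1 and 2, and $F_m(p,q)=\sum_T q^{\mathrm{one}(T)}p^{\mathrm{two}(T)}$ over all Fibonacci tilings of height $m$ (so $F_1=q$, $F_2=q^2$, $F_m=qF_{m-1}+pF_{m-2}$ for $m\ge 3$). There are no Fibonacci tilings of height $0$, and $F_0(p,q)=0$. A Ferrers board $F(b_1,\ldots,b_n)$ is the board whose columns, from left to right, have heights $b_1,\ldots,b_n$. A Fibonacci rook placement of $k$ tilings in $B=F(b_1,\ldots,b_n)$ consists of a choice of columns $1\le i_1<\cdots<i_k\le n$ together with, for each $s=1,\ldots,k$, a Fibonacci tiling of height $b_{i_s-(s-1)}$ placed in column $i_s$ (this is the number of cells of column $i_s$ not canceled by the tilings in columns $i_1,\ldots,i_{s-1}$, where each tiling cancels top cells of the columns to its right so that after placing $s$ tilings the untiled columns have $b_1,\ldots,b_{n-s}$ uncanceled cells from left to right). Its weight is $q^{a}p^{b}$ where $a$ (resp. $b$)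 is the total number of tiles of height 1 (resp. 2) used. $\mathbf{rT}_k(B,p,q)$ is the sum of the weights of all Fibonacci rook placements of $k$ tilings in $B$ (the empty placement, $k=0$, has weight 1; the sum is $0$ if there are none). *)

From mathcomp Require Import all_boot all_order all_algebra.
Set Implicit Arguments. Unset Strict Implicit. Unset Printing Implicit Defensive.
Import GRing.Theory.
Local Open Scope ring_scope.

(* A tiling of a column is a list of tile heights, listed from the bottom
   tile upwards.  [comp12 m] enumerates all tilings of a column of height m
   by tiles of height 1 and 2 (all compositions of m into parts 1 and 2). *)
Fixpoint comp12 (m : nat) : seq (seq nat) :=
  match m with
  | 0 => [:: [::]]
  | m1.+1 =>
    match m1 with
    | 0 => [:: [:: 1%N]]
    | m2.+1 => [seq 1%N :: t | t <- comp12 m1] ++ [seq 2%N :: t | t <- comp12 m2]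
    end
  end.

Definition fib_tilings (m : nat) : seq (seq nat) :=
  [seq t <- comp12 m | head 0%N t == 1%N].

Definition one (t : seq nat) : nat := count_mem 1%N t.
Definition two (t : seq nat) : nat := count_mem 2%N t.

Definition Fib (R : comRingType) (p q : R) (m : nat) : R :=
  \sum_(t <- fib_tilings m) q ^+ one t * p ^+ two t.

Fixpoint choices (T : Type) (l : seq (seq T)) : seq (seq T) :=
  match l with
  | [::] => [:: [::]]
  | c :: l' => [seq x :: y | x <- c, y <- choices l']
  end.

Definition placement_weight (R : comRingType) (p q : R) (ts : seq (seq nat)) : R :=
  q ^+ sumn [seq one t | t <- ts] * p ^+ sumn [seq two t | t <- ts].

(* The board F(b_1,...,b_n) is given by the list b = [:: b_1; ...; b_n].
   A Fibonacci rook placement of k tilings: a set S of k columns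
   (0-indexed j_0 < ... < j_(k-1), i.e. i_s = j_(s-1)+1) and, for each
   s = 0..k-1 (0-indexed), a Fibonacci tiling of height
   b_{i_(s+1) - s} = nth 0 b (j_s - s). *)
Definition rook_cols (n : nat) (S : {set 'I_n}) : seq nat :=
  sort leq [seq val i | i <- enum S].

Definition rT (R : comRingType) (p q : R) (b : seq nat) (k : nat) : R :=
  \sum_(S : {set 'I_(size b)} | #|S| == k)
    \sum_(ts <- choices [seq fib_tilings (nth 0%N b (js.1 - js.2))
                        | js <- zip (rook_cols S) (iota 0 k)])
      placement_weight p q ts.

(* A placement weight is the product of the weights of its tilings, so
   rT_k(B) is the sum, over k-sets S = {j_0 < ... < j_(k-1)} of columns, of
   prod_s F_(b_(j_s - s)).  Split according to whether the last column lies
   in S: if not, S is a k-set of columns of B^- with the same product; if so,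
   S = S' + {last column} with S' a (k-1)-set of columns of B^-, and the last
   column contributes the factor F_(b_(n-(k-1))).  For columns of B^- the
   index j_s - s stays below n-1, so B and B^- give the same products. *)

From Pilot Require Import Defs.
From mathcomp Require Import all_boot all_order all_algebra.
From mathcomp Require Import ring.
Set Implicit Arguments.
Unset Strict Implicit.
Unset Printing Implicit Defensive.
Import GRing.Theory.
Local Open Scope ring_scope.

Lemma enum_set_filter (T : finType) (A : {set T}) :
  enum A = [seq x <- enum T | x \in A].
Proof. by rewrite enumT /enum_mem. Qed.

Lemma rook_cols_enum n (S : {set 'I_n}) : rook_cols S = [seq val i | i <- enum S].
Proof.
rewrite /rook_cols sorted_sort //; first exact: leq_trans.
apply: (@subseq_sorted _ _ leq_trans _ (iota 0 n)).
  by rewrite -val_enum_ord map_subseq // enum_set_filter filter_subseq.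
by have := iota_ltn_sorted 0 n; rewrite ltn_sorted_uniq_leq => /andP[].
Qed.

Section RookWeight.
Variables (R : comRingType) (p q : R).

Lemma sum_choices_placement_weight (L : seq (seq (seq nat))) :
  \sum_(ts <- choices L) placement_weight p q ts =
  \prod_(T <- L) \sum_(t <- T) q ^+ Defs.one t * p ^+ Defs.two t.
Proof.
elim: L => [|c L IH] /=.
  by rewrite big_nil big_seq1 /placement_weight /= !expr0 mulr1.
rewrite big_allpairs_dep big_cons mulr_suml; apply: eq_bigr => x _.
rewrite -IH mulr_sumr; apply: eq_bigr => y _.
rewrite /placement_weight /= !exprD; ring.
Qed.

Definition rook_weight (b cols : seq nat) : R :=
  \prod_(js <- zip cols (iota 0 (size cols))) Fib p q (nth 0%N b (js.1 - js.2)).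

Lemma rT_rook_weight b k n : size b = n ->
  rT p q b k = \sum_(S : {set 'I_n} | #|S| == k) rook_weight b (rook_cols S).
Proof.
move=> <-; apply: eq_bigr => S /eqP cardS.
rewrite sum_choices_placement_weight big_map /rook_weight.
by rewrite rook_cols_enum size_map -cardE cardS.
Qed.

Lemma rook_weight_rcons b cols j :
  rook_weight b (rcons cols j) =
  rook_weight b cols * Fib p q (nth 0%N b (j - size cols)).
Proof.
rewrite /rook_weight size_rcons -addn1 iotaD add0n /= cats1 zip_rcons ?size_iota //.
by rewrite -cats1 big_cat big_seq1.
Qed.

Lemma rook_weight_take n b (S : {set 'I_n}) :
  rook_weight b (rook_cols S) = rook_weight (take n b) (rook_cols S).
Proof.
rewrite /rook_weight; apply: eq_big_seq => js js_in; congr Fib.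
rewrite nth_take //.
have : js.1 \in rook_cols S.
  by rewrite -[rook_cols S](@unzip1_zip _ _ _ (iota 0 (size (rook_cols S))))
     ?size_iota // (map_f fst js_in).
rewrite rook_cols_enum => /mapP[i _ ->].
exact: leq_ltn_trans (leq_subr _ _) (ltn_ord i).
Qed.

Section LastColumn.
Variable n : nat.

Local Notation lift_last := (lift (@ord_max n)).

Lemma lift_last_inj : injective lift_last.
Proof. exact: lift_inj. Qed.

Lemma ord_max_notin_lift_last (S : {set 'I_n}) : ord_max \notin lift_last @: S.
Proof.
apply/imsetP => -[i _] max_eq_lift; have := ltn_ord i.
by rewrite -(lift_max i) -max_eq_lift ltnn.
Qed.

Lemma widen_ord_lift_last (i : 'I_n) : widen_ord (leqnSn n) i = lift_last i.
Proof. exact/val_inj/esym/lift_max. Qed.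

Lemma rook_cols_lift_last (S : {set 'I_n}) : rook_cols (lift_last @: S) = rook_cols S.
Proof.
rewrite !rook_cols_enum !enum_set_filter enum_ordSr filter_rcons.
rewrite (negbTE (ord_max_notin_lift_last S)) filter_map -!map_comp.
congr map; apply: eq_filter => i /=.
by rewrite widen_ord_lift_last (mem_imset _ _ lift_last_inj).
Qed.

Lemma rook_cols_setU1_max (S : {set 'I_n}) :
  rook_cols (ord_max |: lift_last @: S) = rcons (rook_cols S) n.
Proof.
rewrite !rook_cols_enum !enum_set_filter enum_ordSr filter_rcons setU11 map_rcons.
rewrite filter_map -!map_comp; congr rcons; congr map; apply: eq_filter => i /=.
rewrite widen_ord_lift_last !inE (mem_imset _ _ lift_last_inj).
by rewrite eq_sym (negbTE (neq_lift _ _)).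
Qed.

Lemma preimset_lift_last_imset (S : {set 'I_n}) : lift_last @^-1: (lift_last @: S) = S.
Proof. by apply/setP => i; rewrite inE (mem_imset _ _ lift_last_inj). Qed.

Lemma preimset_lift_last_setU1 (S : {set 'I_n}) :
  lift_last @^-1: (ord_max |: lift_last @: S) = S.
Proof.
apply/setP => i; rewrite !inE (mem_imset _ _ lift_last_inj).
by rewrite eq_sym (negbTE (neq_lift _ _)).
Qed.

Lemma imset_lift_last_preimset (S : {set 'I_n.+1}) :
  ord_max \notin S -> lift_last @: (lift_last @^-1: S) = S.
Proof.
move=> maxNS; apply/setP => i; case: (unliftP ord_max i) => [j ->|->].
  by rewrite (mem_imset _ _ lift_last_inj) inE.
by rewrite (negbTE maxNS) (negbTE (ord_max_notin_lift_last _)).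
Qed.

Lemma setU1_max_imset_lift_last_preimset (S : {set 'I_n.+1}) :
  ord_max \in S -> ord_max |: lift_last @: (lift_last @^-1: S) = S.
Proof.
move=> maxS; apply/setP => i; rewrite inE; case: (unliftP ord_max i) => [j ->|->].
  rewrite in_set1 eq_sym (negbTE (neq_lift _ _)).
  by rewrite (mem_imset _ _ lift_last_inj) inE.
by rewrite in_set1 eqxx maxS.
Qed.

Lemma card_setU1_max_lift_last (S : {set 'I_n}) :
  #|ord_max |: lift_last @: S| = #|S|.+1.
Proof.
by rewrite cardsU1 ord_max_notin_lift_last (card_imset _ lift_last_inj).
Qed.

Lemma sum_rook_weight_without_max b k :
  \sum_(S : {set 'I_n.+1} | (#|S| == k) && (ord_max \notin S)) rook_weight b (rook_cols S)
  = \sum_(S : {set 'I_n} | #|S| == k) rook_weight b (rook_cols S).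
Proof.
rewrite (reindex_onto (fun S : {set 'I_n} => lift_last @: S)
                      (fun S : {set 'I_n.+1} => lift_last @^-1: S)); last first.
  by move=> S /andP[_]; exact: imset_lift_last_preimset.
apply: eq_big => S; last by rewrite rook_cols_lift_last.
rewrite preimset_lift_last_imset eqxx ord_max_notin_lift_last.
by rewrite (card_imset _ lift_last_inj) !andbT.
Qed.

Lemma sum_rook_weight_with_max b k : (0 < k)%N ->
  \sum_(S : {set 'I_n.+1} | (#|S| == k) && (ord_max \in S)) rook_weight b (rook_cols S)
  = Fib p q (nth 0%N b (n.+1 - k))
    * \sum_(S : {set 'I_n} | #|S| == k.-1) rook_weight b (rook_cols S).
Proof.
move=> k_gt0.
rewrite (reindex_onto (fun S : {set 'I_n} => ord_max |: lift_last @: S)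
                      (fun S : {set 'I_n.+1} => lift_last @^-1: S)).
  rewrite mulr_sumr; apply: eq_big => S.
    rewrite preimset_lift_last_setU1 eqxx setU11 card_setU1_max_lift_last !andbT.
    by case: k k_gt0.
  move=> /andP[/andP[/eqP cardS _] _]; rewrite card_setU1_max_lift_last in cardS.
  rewrite rook_cols_setU1_max rook_weight_rcons mulrC.
  by rewrite rook_cols_enum size_map -cardE -cardS subSS.
by move=> S /andP[_]; exact: setU1_max_imset_lift_last_preimset.
Qed.

End LastColumn.
End RookWeight.

Theorem theorem3 (R : comRingType) (p q : R) (b : seq nat) (k : nat) :
  sorted leq b -> (0 < last 0 b)%N -> (1 <= k <= size b)%N ->
  rT p q b k =
    rT p q (take (size b).-1 b) k
    + Fib p q (nth 0%N b (size b - k)) * rT p q (take (size b).-1 b) k.-1.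
Proof.
move=> _ _ /andP[k_gt0 k_le_b].
have [n size_b] : exists n, size b = n.+1.
  by case: (size b) k_le_b => [|m]; [case: k k_gt0 | exists m].
have size_take_b : size (take n b) = n by rewrite size_take size_b ltnSn.
rewrite size_b /= (rT_rook_weight p q k size_b).
rewrite (rT_rook_weight p q k size_take_b) (rT_rook_weight p q k.-1 size_take_b).
rewrite (bigID (fun S : {set 'I_n.+1} => ord_max \in S)) /= addrC.
rewrite sum_rook_weight_without_max sum_rook_weight_with_max //.
by congr (_ + _ * _); apply: eq_bigr => S _; exact: rook_weight_take.
Qed.
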